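(* Let $R \in \mathcal{R}$. Then there exists a nice set $X$ such that $R = X \to \mathcal{N}$, where $X \to \mathcal{N} = \{t \in \mathcal{T} : (t\;\bar{w}) \in \mathcal{N} \text{ for each } \bar{w} \in X\}$.
   Context: With disjoint sets of $\lambda$-variables $x,y,\dots$ and $\mu$-variables $a,b,\dots$, terms and $\mathcal{E}$-terms are $\mathcal{T} ::= x \mid \lambda x.\mathcal{T} \mid (\mathcal{T}\;\mathcal{E}) \mid \langle \mathcal{T},\mathcal{T}\rangle \mid \omega_1\mathcal{T} \mid \omega_2\mathcal{T} \mid \mu a.\mathcal{T} \mid (a\;\mathcal{T})$, $\mathcal{E} ::= \mathcal{T} \mid \pi_1 \mid \pi_2 \mid [x.\mathcal{T}, y.\mathcal{T}]$ (up to renaming of bound variables). The one-step reduction $\triangleright$ is the closure under all constructors of: $(\lambda x.u\;v)\triangleright u[x:=v]$; $(\langle t_1,t_2\rangle\;\pi_i)\triangleright t_i$; $(\omega_i t\;[x_1.u_1,x_2.u_2])\triangleright u_i[x_i:=t]$; $((t\;[x_1.u_1,x_2.u_2])\;\varepsilon)\triangleright(t\;[x_1.(u_1\;\varepsilon),x_2.(u_2\;\varepsilon)])$; $(\mu a.t\;\varepsilon)\triangleright\mu a.t[a:=^*\varepsilon]$, where $t[a:=^*\varepsilon]$ replaces inductively each subterm $(a\;v)$ by $(a\;(v\;\varepsilon))$. $\mathcal{N}$ (resp. $\mathcal{N}'$) is the set of strongly normalizable terms (resp. $\mathcal{E}$-terms), and $\mathcal{N}'^{<\omega}$ the set of finite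 sequences of elements of $\mathcal{N}'$. For $\bar{w}=w_1\dots w_n$ and a term $t$, $(t\;\bar{w})$ is $t$ if $n=0$ and $((t\;w_1)\;w_2\dots w_n)$ otherwise. A sequence $\bar{w}\in\mathcal{N}'^{<\omega}$ is nice iff none of $w_1,\dots,w_{n-1}$ is of the form $[x.u,y.v]$; a set $X\subseteq\mathcal{N}'^{<\omega}$ is nice iff all its elements are nice sequences. For sets $K,L$ of terms: $K\to L=\{t\in\mathcal{T} : (t\;u)\in L \text{ for all } u\in K\}$; $K\wedge L=\{t : (t\;\pi_1)\in K, (t\;\pi_2)\in L\}$; $K\vee L=\{t :$ for all $\lambda$-variables $x,y$ and all $u,v\in\mathcal{N}$, if $u[x:=r]\in\mathcal{N}$ and $v[y:=s]\in\mathcal{N}$ for all $r\in K,s\in L$, then $(t\;[x.u,y.v])\in\mathcal{N}\}$. $\mathcal{R}$ is the smallest set of sets of terms containing $\mathcal{N}$ and closed under $\to,\wedge,\vee$. *)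

(* Lambda-mu calculus with pairs and sums, de Bruijn indices.
   lambda-variables and mu-variables are two separate de Bruijn index spaces. *)
From Stdlib Require Import List Arith.
Import ListNotations.

Inductive term : Type :=
| Var : nat -> term
| Lam : term -> term
| App : term -> eterm -> term
| Pair : term -> term -> term
| Inj1 : term -> term
| Inj2 : term -> term
| Mu : term -> term
| Named : nat -> term -> term       (* (a t), a a mu-variable *)
with eterm : Type :=
| ETerm : term -> eterm
| Proj1 : eterm
| Proj2 : eterm
| Case : term -> term -> eterm.     (* [x.u, y.v], each branch binds lambda-index 0 *)

Definition upren (xi : nat -> nat) : nat -> nat :=
  fun n => match n with 0 => 0 | S m => S (xi m) end.

Fixpoint ren_l (xi : nat -> nat) (t : term) : term :=
  match t with
  | Var n => Var (xi n)
  | Lam u => Lam (ren_l (upren xi) u)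
  | App u e => App (ren_l xi u) (eren_l xi e)
  | Pair a b => Pair (ren_l xi a) (ren_l xi b)
  | Inj1 u => Inj1 (ren_l xi u)
  | Inj2 u => Inj2 (ren_l xi u)
  | Mu u => Mu (ren_l xi u)
  | Named a u => Named a (ren_l xi u)
  end
with eren_l (xi : nat -> nat) (e : eterm) : eterm :=
  match e with
  | ETerm u => ETerm (ren_l xi u)
  | Proj1 => Proj1
  | Proj2 => Proj2
  | Case u v => Case (ren_l (upren xi) u) (ren_l (upren xi) v)
  end.

Fixpoint ren_m (xi : nat -> nat) (t : term) : term :=
  match t with
  | Var n => Var n
  | Lam u => Lam (ren_m xi u)
  | App u e => App (ren_m xi u) (eren_m xi e)
  | Pair a b => Pair (ren_m xi a) (ren_m xi b)
  | Inj1 u => Inj1 (ren_m xi u)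
  | Inj2 u => Inj2 (ren_m xi u)
  | Mu u => Mu (ren_m (upren xi) u)
  | Named a u => Named (xi a) (ren_m xi u)
  end
with eren_m (xi : nat -> nat) (e : eterm) : eterm :=
  match e with
  | ETerm u => ETerm (ren_m xi u)
  | Proj1 => Proj1
  | Proj2 => Proj2
  | Case u v => Case (ren_m xi u) (ren_m xi v)
  end.

Definition up_l (sigma : nat -> term) : nat -> term :=
  fun n => match n with 0 => Var 0 | S m => ren_l S (sigma m) end.

Definition up_m (sigma : nat -> term) : nat -> term :=
  fun n => ren_m S (sigma n).

Fixpoint subst_l (sigma : nat -> term) (t : term) : term :=
  match t with
  | Var n => sigma n
  | Lam u => Lam (subst_l (up_l sigma) u)
  | App u e => App (subst_l sigma u) (esubst_l sigma e)
  | Pair a b => Pair (subst_l sigma a) (subst_l sigma b)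
  | Inj1 u => Inj1 (subst_l sigma u)
  | Inj2 u => Inj2 (subst_l sigma u)
  | Mu u => Mu (subst_l (up_m sigma) u)
  | Named a u => Named a (subst_l sigma u)
  end
with esubst_l (sigma : nat -> term) (e : eterm) : eterm :=
  match e with
  | ETerm u => ETerm (subst_l sigma u)
  | Proj1 => Proj1
  | Proj2 => Proj2
  | Case u v => Case (subst_l (up_l sigma) u) (subst_l (up_l sigma) v)
  end.

Definition subst0 (u v : term) : term :=
  subst_l (fun n => match n with 0 => v | S m => Var m end) u.

(* t[a:=* e] with a = mu-index k: each (a v) becomes (a (v[a:=*e] e)) *)
Fixpoint msubst (k : nat) (e : eterm) (t : term) : term :=
  match t with
  | Var n => Var n
  | Lam u => Lam (msubst k (eren_l S e) u)
  | App u e' => App (msubst k e u) (emsubst k e e')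
  | Pair a b => Pair (msubst k e a) (msubst k e b)
  | Inj1 u => Inj1 (msubst k e u)
  | Inj2 u => Inj2 (msubst k e u)
  | Mu u => Mu (msubst (S k) (eren_m S e) u)
  | Named a u =>
      if Nat.eqb a k then Named a (App (msubst k e u) e)
      else Named a (msubst k e u)
  end
with emsubst (k : nat) (e : eterm) (e' : eterm) : eterm :=
  match e' with
  | ETerm u => ETerm (msubst k e u)
  | Proj1 => Proj1
  | Proj2 => Proj2
  | Case u v => Case (msubst k (eren_l S e) u) (msubst k (eren_l S e) v)
  end.

Inductive step : term -> term -> Prop :=
| st_beta : forall u v, step (App (Lam u) (ETerm v)) (subst0 u v)
| st_pi1 : forall t1 t2, step (App (Pair t1 t2) Proj1) t1
| st_pi2 : forall t1 t2, step (App (Pair t1 t2) Proj2) t2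
| st_case1 : forall t u1 u2, step (App (Inj1 t) (Case u1 u2)) (subst0 u1 t)
| st_case2 : forall t u1 u2, step (App (Inj2 t) (Case u1 u2)) (subst0 u2 t)
| st_comm : forall t u1 u2 e,
    step (App (App t (Case u1 u2)) e)
         (App t (Case (App u1 (eren_l S e)) (App u2 (eren_l S e))))
| st_mu : forall t e, step (App (Mu t) e) (Mu (msubst 0 (eren_m S e) t))
| st_lam : forall u u', step u u' -> step (Lam u) (Lam u')
| st_appl : forall u u' e, step u u' -> step (App u e) (App u' e)
| st_appr : forall u e e', estep e e' -> step (App u e) (App u e')
| st_pairl : forall a a' b, step a a' -> step (Pair a b) (Pair a' b)
| st_pairr : forall a b b', step b b' -> step (Pair a b) (Pair a b')
| st_inj1 : forall u u', step u u' -> step (Inj1 u) (Inj1 u')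
| st_inj2 : forall u u', step u u' -> step (Inj2 u) (Inj2 u')
| st_mu_c : forall u u', step u u' -> step (Mu u) (Mu u')
| st_named : forall a u u', step u u' -> step (Named a u) (Named a u')
with estep : eterm -> eterm -> Prop :=
| est_term : forall u u', step u u' -> estep (ETerm u) (ETerm u')
| est_casel : forall u u' v, step u u' -> estep (Case u v) (Case u' v)
| est_caser : forall u v v', step v v' -> estep (Case u v) (Case u v').

Definition SN (t : term) : Prop := Acc (fun a b => step b a) t.
Definition ESN (e : eterm) : Prop := Acc (fun a b => estep b a) e.

Definition apps (t : term) (ws : list eterm) : term :=
  fold_left (fun acc w => App acc w) ws t.

Definition is_case (e : eterm) : Prop :=
  match e with Case _ _ => True | _ => False end.

Definition nice (ws : list eterm) : Prop :=
  Forall ESN ws /\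
  forall i, S i < length ws -> ~ is_case (nth i ws Proj1).

Definition nice_set (X : list eterm -> Prop) : Prop :=
  forall ws, X ws -> nice ws.

Definition seq_arrow_N (X : list eterm -> Prop) (t : term) : Prop :=
  forall ws, X ws -> SN (apps t ws).

Definition arrow (K L : term -> Prop) (t : term) : Prop :=
  forall u, K u -> L (App t (ETerm u)).

Definition wedge (K L : term -> Prop) (t : term) : Prop :=
  K (App t Proj1) /\ L (App t Proj2).

(* u, v are branch bodies whose bound lambda-variable is index 0 *)
Definition vee (K L : term -> Prop) (t : term) : Prop :=
  forall u v, SN u -> SN v ->
    (forall r, K r -> SN (subst0 u r)) ->
    (forall s, L s -> SN (subst0 v s)) ->
    SN (App t (Case u v)).

Inductive inR : (term -> Prop) -> Prop :=
| inR_N : inR SN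
| inR_arrow : forall K L, inR K -> inR L -> inR (arrow K L)
| inR_wedge : forall K L, inR K -> inR L -> inR (wedge K L)
| inR_vee : forall K L, inR K -> inR L -> inR (vee K L).

(* For N take X = {()}; for K -> L prepend an argument from K
   to the sequences representing L; for K /\ L prepend pi_1 to those
   representing K and pi_2 to those representing L; for K \/ L take the
   one-element sequences [x.u, y.v] with u, v as in the definition of K \/ L.
   Niceness of the new sequences needs K to consist of strongly normalizable
   terms; this follows from X being nonempty, which in turn is kept invariant
   because a variable applied to a nice sequence is strongly normalizable. *)
From Stdlib Require Import List Lia.
Import ListNotations.

Lemma SN_Var n : SN (Var n).
Proof. constructor; intros y H; inversion H. Qed.

Lemma ESN_Proj1 : ESN Proj1.
Proof. constructor; intros y H; inversion H. Qed.

Lemma ESN_Proj2 : ESN Proj2.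
Proof. constructor; intros y H; inversion H. Qed.

Lemma ESN_ETerm u : SN u -> ESN (ETerm u).
Proof.
  induction 1 as [u _ IH].
  constructor; intros y H; inversion H; subst; apply IH; assumption.
Qed.

Lemma ESN_Case u v : SN u -> SN v -> ESN (Case u v).
Proof.
  intros Hu; revert v; induction Hu as [u Hu IHu]; intros v Hv.
  induction Hv as [v Hv IHv].
  constructor; intros y H; inversion H; subst.
  - apply IHu; [assumption | constructor; assumption].
  - apply IHv; assumption.
Qed.

Lemma SN_App_inv t e : SN (App t e) -> SN t.
Proof.
  intros H; remember (App t e) as x eqn:Ex; revert t e Ex.
  induction H as [x _ IH]; intros t e ->.
  constructor; intros y Hy.
  eapply IH; [apply st_appl, Hy | reflexivity].
Qed.

Lemma SN_apps_inv ws : forall t, SN (apps t ws) -> SN t.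
Proof.
  induction ws as [|w ws IH]; simpl; [auto|].
  intros t H; eapply SN_App_inv, IH, H.
Qed.

(* No head redex can ever arise in a neutral term, so neutrality is preserved
   by reduction. *)
Inductive neutral : term -> Prop :=
| neutral_Var n : neutral (Var n)
| neutral_App a w : neutral a -> ~ is_case w -> neutral (App a w).

Lemma not_case_estep w w' : estep w w' -> ~ is_case w -> ~ is_case w'.
Proof. intros H; inversion H; simpl; auto. Qed.

Lemma neutral_step a a' : neutral a -> step a a' -> neutral a'.
Proof.
  intros Ha; revert a'.
  induction Ha as [n|a w Ha IH Hw]; intros a' H; inversion H; subst;
    try solve [inversion Ha].
  - inversion Ha; simpl in *; tauto.
  - constructor; auto.
  - constructor; [assumption | eapply not_case_estep; eassumption].
Qed.

Lemma SN_App_neutral a w : neutral a -> SN a -> ESN w -> SN (App a w).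
Proof.
  intros Hn Ha; revert Hn w.
  induction Ha as [a _ IHa]; intros Hn w Hw.
  induction Hw as [w Hw IHw].
  constructor; intros y H; inversion H; subst; try solve [inversion Hn].
  - inversion Hn as [|a' w' Ha' Hw']; subst.
    inversion Ha'; simpl in Hw'; tauto.
  - apply IHa; [assumption | eapply neutral_step; eassumption | constructor; assumption].
  - apply IHw; assumption.
Qed.

Lemma nice_nil : nice [].
Proof. split; [constructor | simpl; lia]. Qed.

Lemma nice_cons_iff w ws :
  nice (w :: ws) <-> ESN w /\ nice ws /\ (ws <> [] -> ~ is_case w).
Proof.
  split.
  - intros [Hf Hc]; inversion Hf; subst.
    split; [assumption|split].
    + split; [assumption|].
      intros i Hi; apply (Hc (S i)); simpl; lia.
    + intros Hne; apply (Hc 0); destruct ws; simpl; [congruence | lia].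
  - intros [Hw [[Hf Hc] Hhd]]; split; [constructor; assumption|].
    intros [|i] Hi; simpl in *.
    + apply Hhd; destruct ws; simpl in Hi; [lia | discriminate].
    + apply Hc; lia.
Qed.

Lemma SN_apps_neutral ws : forall a,
  neutral a -> SN a -> nice ws -> SN (apps a ws).
Proof.
  induction ws as [|w ws IH]; intros a Hn Ha Hws; simpl; [assumption|].
  apply nice_cons_iff in Hws as [Hw [Hws Hhd]].
  destruct ws as [|w' ws'].
  - apply SN_App_neutral; assumption.
  - assert (Hw_neutral : neutral (App a w))
      by (constructor; [assumption | apply Hhd; discriminate]).
    apply IH; [exact Hw_neutral | apply SN_App_neutral | ]; assumption.
Qed.

Lemma seq_arrow_N_Var X n : nice_set X -> seq_arrow_N X (Var n).
Proof.
  intros HX ws Hws; apply SN_apps_neutral; [constructor | apply SN_Var | auto].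
Qed.

Lemma seq_arrow_N_sub_SN X t :
  (exists ws, X ws) -> seq_arrow_N X t -> SN t.
Proof. intros [ws Hws] H; exact (SN_apps_inv ws t (H ws Hws)). Qed.

Definition arrow_seqs (K : term -> Prop) (X : list eterm -> Prop)
  (ws : list eterm) : Prop :=
  exists u ws', K u /\ X ws' /\ ws = ETerm u :: ws'.

Definition wedge_seqs (X1 X2 : list eterm -> Prop) (ws : list eterm) : Prop :=
  (exists ws', X1 ws' /\ ws = Proj1 :: ws') \/
  (exists ws', X2 ws' /\ ws = Proj2 :: ws').

Definition vee_seqs (K L : term -> Prop) (ws : list eterm) : Prop :=
  exists u v, SN u /\ SN v /\
    (forall r, K r -> SN (subst0 u r)) /\
    (forall s, L s -> SN (subst0 v s)) /\ ws = [Case u v].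

Lemma nice_cons_not_case w ws : ESN w -> ~ is_case w -> nice ws -> nice (w :: ws).
Proof. intros Hw Hc Hws; apply nice_cons_iff; auto. Qed.

Lemma nice_set_arrow_seqs K X :
  (forall u, K u -> SN u) -> nice_set X -> nice_set (arrow_seqs K X).
Proof.
  intros HK HX ws (u & ws' & Hu & Hws' & ->).
  apply nice_cons_not_case; [apply ESN_ETerm | simpl | ]; auto.
Qed.

Lemma nice_set_wedge_seqs X1 X2 :
  nice_set X1 -> nice_set X2 -> nice_set (wedge_seqs X1 X2).
Proof.
  intros H1 H2 ws [(ws' & Hws' & ->) | (ws' & Hws' & ->)];
    apply nice_cons_not_case; auto using ESN_Proj1, ESN_Proj2.
Qed.

Lemma nice_set_vee_seqs K L : nice_set (vee_seqs K L).
Proof.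
  intros ws (u & v & Hu & Hv & _ & _ & ->).
  apply nice_cons_iff; split; [apply ESN_Case; assumption|].
  split; [apply nice_nil | congruence].
Qed.

Lemma arrow_seqs_inhabited K X :
  K (Var 0) -> (exists ws, X ws) -> exists ws, arrow_seqs K X ws.
Proof. intros HK [ws Hws]; exists (ETerm (Var 0) :: ws), (Var 0), ws; auto. Qed.

Lemma vee_seqs_inhabited K L : exists ws, vee_seqs K L ws.
Proof.
  (* [Var 1] under the binder of a branch does not mention the bound variable. *)
  exists [Case (Var 1) (Var 1)], (Var 1), (Var 1).
  split; [apply SN_Var|]; split; [apply SN_Var|].
  split; [intros; apply SN_Var|]; split; [intros; apply SN_Var | reflexivity].
Qed.

Lemma arrow_seq_arrow_N K L X :
  (forall t, L t <-> seq_arrow_N X t) ->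
  forall t, arrow K L t <-> seq_arrow_N (arrow_seqs K X) t.
Proof.
  intros HL t; split.
  - intros H ws (u & ws' & Hu & Hws' & ->).
    exact (proj1 (HL _) (H u Hu) ws' Hws').
  - intros H u Hu; apply HL; intros ws' Hws'.
    apply (H (ETerm u :: ws')); exists u, ws'; auto.
Qed.

Lemma wedge_seq_arrow_N K L X1 X2 :
  (forall t, K t <-> seq_arrow_N X1 t) ->
  (forall t, L t <-> seq_arrow_N X2 t) ->
  forall t, wedge K L t <-> seq_arrow_N (wedge_seqs X1 X2) t.
Proof.
  intros HK HL t; split.
  - intros [H1 H2] ws [(ws' & Hws' & ->) | (ws' & Hws' & ->)].
    + exact (proj1 (HK _) H1 ws' Hws').
    + exact (proj1 (HL _) H2 ws' Hws').
  - intros H; split; [apply HK | apply HL]; intros ws' Hws'.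
    + apply (H (Proj1 :: ws')); left; eauto.
    + apply (H (Proj2 :: ws')); right; eauto.
Qed.

Lemma vee_seq_arrow_N K L t : vee K L t <-> seq_arrow_N (vee_seqs K L) t.
Proof.
  split.
  - intros H ws (u & v & Hu & Hv & Hr & Hs & ->); apply H; assumption.
  - intros H u v Hu Hv Hr Hs; apply (H [Case u v]); exists u, v; auto.
Qed.

Definition represented (R : term -> Prop) (X : list eterm -> Prop) : Prop :=
  nice_set X /\ (exists ws, X ws) /\ (forall t, R t <-> seq_arrow_N X t).

Lemma represented_N : represented SN (fun ws => ws = []).
Proof.
  split; [intros ws ->; apply nice_nil|].
  split; [exists []; reflexivity|].
  intros t; split; [intros H ws -> | intros H; apply (H [])]; auto.
Qed.

Lemma represented_sub_SN R X t : represented R X -> R t -> SN t.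
Proof. intros (_ & Hne & HR) Ht; eapply seq_arrow_N_sub_SN, HR; eassumption. Qed.

Lemma represented_Var R X : represented R X -> R (Var 0).
Proof. intros (HX & _ & HR); apply HR, seq_arrow_N_Var, HX. Qed.

Lemma inR_represented R : inR R -> exists X, represented R X.
Proof.
  induction 1 as [| K L _ [X1 H1] _ [X2 H2]
                  | K L _ [X1 H1] _ [X2 H2]
                  | K L _ [X1 H1] _ [X2 H2]].
  - exists (fun ws => ws = []); apply represented_N.
  - exists (arrow_seqs K X2); destruct H2 as (N2 & E2 & I2); split; [|split].
    + apply nice_set_arrow_seqs; [intro; apply (represented_sub_SN _ _ _ H1) | auto].
    + apply arrow_seqs_inhabited; [eapply represented_Var | ]; eassumption.
    + apply arrow_seq_arrow_N, I2.
  - exists (wedge_seqs X1 X2);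
      destruct H1 as (N1 & [ws E1] & I1), H2 as (N2 & _ & I2); split; [|split].
    + apply nice_set_wedge_seqs; assumption.
    + exists (Proj1 :: ws); left; eauto.
    + apply wedge_seq_arrow_N; assumption.
  - exists (vee_seqs K L); split; [|split].
    + apply nice_set_vee_seqs.
    + apply vee_seqs_inhabited.
    + apply vee_seq_arrow_N.
Qed.

Theorem lemma6 (R : term -> Prop) (HR : inR R) :
  exists X : list eterm -> Prop,
    nice_set X /\ (forall t, R t <-> seq_arrow_N X t).
Proof.
  destruct (inR_represented R HR) as (X & HX & _ & HRX).
  exists X; split; assumption.
Qed.
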